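(* Let $N,l$ be positive integers with $l<N$, and let $\hat a(\xi)=\cos^{2N}(\xi/2)\sum_{j=0}^{l}\binom{N-1+j}{j}\sin^{2j}(\xi/2)$ be the mask of the pseudo spline of type II of order $(N,l)$. Then for all $\xi\in\mathbb R$, $$|\hat a(\xi)|\ge 1-C_1|\xi|^{2l+2},\qquad C_1=\frac{\sum_{j=l+1}^{N+l}\binom{N+l}{j}}{2^{2l+2}}.$$ *)

From Stdlib Require Import Reals Lra Lia.
Open Scope R_scope.

Definition pseudo_mask_II (N l : nat) (xi : R) : R :=
  (cos (xi / 2)) ^ (2 * N) *
  sum_f_R0 (fun j => C (N - 1 + j) j * (sin (xi / 2)) ^ (2 * j)) l.

(* C1 = (sum_{j=l+1}^{N+l} C(N+l, j)) / 2^(2l+2);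
   the sum is reindexed as j = l+1+i, i = 0 .. N-1. *)
Definition C1_const (N l : nat) : R :=
  sum_f_R0 (fun i => C (N + l) (l + 1 + i)) (N - 1) / 2 ^ (2 * l + 2).

(* With x = cos^2(xi/2) and y = sin^2(xi/2), so that x + y = 1, the mask equals the
   first l+1 terms of the binomial expansion of (x + y)^(N+l) = 1.  Hence 1 minus the
   mask is the remaining tail, whose every term carries a factor y^(l+1), and
   y <= (xi/2)^2 bounds that factor by |xi|^(2l+2) / 2^(2l+2). *)
From Stdlib Require Import Reals Lra Lia.
Open Scope R_scope.

Lemma C_ge0 n k : 0 <= C n k.
Proof.
  unfold C; apply Rlt_le, Rdiv_lt_0_compat; [apply INR_fact_lt_0|].
  apply Rmult_lt_0_compat; apply INR_fact_lt_0.
Qed.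

Lemma C_n0 n : C n 0 = 1.
Proof.
  unfold C; rewrite Nat.sub_0_r; simpl.
  field; apply not_0_INR, Factorial.fact_neq_0.
Qed.

Lemma Rabs_sin_le_nonneg u : 0 <= u -> Rabs (sin u) <= u.
Proof.
  intros Hu; apply Rabs_le.
  pose proof (SIN_bound u); pose proof PI2_1.
  split.
  - destruct (Rle_lt_dec 1 u); [lra|].
    pose proof (sin_ge_0 u Hu ltac:(lra)); lra.
  - destruct (Req_dec u 0) as [->|Hu0]; [rewrite sin_0; lra|].
    apply Rlt_le, sin_lt_x; lra.
Qed.

Lemma Rabs_sin_le u : Rabs (sin u) <= Rabs u.
Proof.
  destruct (Rle_lt_dec 0 u) as [Hu|Hu].
  - rewrite (Rabs_right u) by lra; now apply Rabs_sin_le_nonneg.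
  - rewrite <- Rabs_Ropp, <- sin_neg, (Rabs_left u) by lra.
    apply Rabs_sin_le_nonneg; lra.
Qed.

Definition binomial_head (n m : nat) (x y : R) : R :=
  sum_f_R0 (fun j => C n j * y ^ j * x ^ (n - j)) m.

Lemma binomial_head_pascal n m x y : (m < n)%nat ->
  binomial_head (S n) (S m) x y
  = x * binomial_head n (S m) x y + y * binomial_head n m x y.
Proof.
  intros Hmn; unfold binomial_head.
  rewrite !(decomp_sum _ (S m)) by lia; simpl pred.
  rewrite C_n0, !Nat.sub_0_r, Rmult_plus_distr_l.
  rewrite (sum_eq _ (fun i => C n i * y ^ i * x ^ (n - i) * y
                              + C n (S i) * y ^ S i * x ^ (n - S i) * x)).
  - rewrite plus_sum, !scal_sum, C_n0; simpl; ring.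
  - intros i Hi; rewrite <- pascal by lia.
    replace (S n - S i)%nat with (S (n - S i)) by lia.
    replace (n - i)%nat with (S (n - S i)) by lia.
    simpl; ring.
Qed.

(* Induction on [m]: by Pascal's rule and [x + y = 1], passing from [m] to [m+1] adds
   exactly [x^N C(N+m, m+1) y^(m+1)] to the right-hand side. *)
Lemma pow_mul_negbinomial_sum N m x y : (1 <= N)%nat -> x + y = 1 ->
  x ^ N * sum_f_R0 (fun j => C (N - 1 + j) j * y ^ j) m
  = binomial_head (N + m) m x y.
Proof.
  intros HN Hxy; induction m as [|m IH].
  - unfold binomial_head; simpl; rewrite !C_n0, Nat.add_0_r, Nat.sub_0_r; ring.
  - assert (HxN : x ^ N = x * x ^ (N - 1))
      by (replace N with (S (N - 1)) at 1 by lia; reflexivity).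
    rewrite tech5, Rmult_plus_distr_l, IH.
    replace (N + S m)%nat with (S (N + m)) by lia.
    replace (N - 1 + S m)%nat with (N + m)%nat by lia.
    rewrite binomial_head_pascal by lia.
    unfold binomial_head at 2; rewrite tech5; fold (binomial_head (N + m) m x y).
    replace (N + m - S m)%nat with (N - 1)%nat by lia.
    rewrite HxN.
    set (B := binomial_head (N + m) m x y).
    replace y with (1 - x) at 3 by lra.
    ring.
Qed.

Lemma one_sub_binomial_head n l x y : (l < n)%nat -> x + y = 1 ->
  1 - binomial_head n l x y
  = sum_f_R0 (fun i => C n (S l + i) * y ^ (S l + i) * x ^ (n - (S l + i))) (n - S l).
Proof.
  intros Hln Hxy.
  assert (Hone : 1 = (y + x) ^ n) by (replace (y + x) with 1 by lra; now rewrite pow1).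
  rewrite Hone, binomial, (tech2 _ l n Hln); unfold binomial_head; ring.
Qed.

Lemma pow_le_1 a k : 0 <= a <= 1 -> a ^ k <= 1.
Proof. intros Ha; rewrite <- (pow1 k); now apply pow_incr. Qed.

Lemma one_sub_binomial_head_le n l x y :
  (l < n)%nat -> 0 <= x -> 0 <= y -> x + y = 1 ->
  1 - binomial_head n l x y
  <= y ^ (l + 1) * sum_f_R0 (fun i => C n (l + 1 + i)) (n - S l).
Proof.
  intros Hln Hx Hy Hxy.
  rewrite one_sub_binomial_head, scal_sum by assumption.
  apply sum_Rle; intros i _.
  replace (S l + i)%nat with (l + 1 + i)%nat by lia; rewrite pow_add.
  pose proof (C_ge0 n (l + 1 + i)); pose proof (pow_le y (l + 1) Hy).
  assert (Hyx : y ^ i * x ^ (n - (l + 1 + i)) <= 1).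
  { rewrite <- (Rmult_1_r 1).
    apply Rmult_le_compat; try apply pow_le; try apply pow_le_1; lra. }
  assert (0 <= C n (l + 1 + i) * y ^ (l + 1)) by (apply Rmult_le_pos; lra).
  nra.
Qed.

Lemma cos_sq_add_sin_sq u : cos u ^ 2 + sin u ^ 2 = 1.
Proof. pose proof (sin2_cos2 u); unfold Rsqr in *; simpl; lra. Qed.

Lemma pseudo_mask_II_binomial_head N l xi : (1 <= N)%nat ->
  pseudo_mask_II N l xi
  = binomial_head (N + l) l (cos (xi / 2) ^ 2) (sin (xi / 2) ^ 2).
Proof.
  intros HN.
  unfold pseudo_mask_II; rewrite pow_mult, <- pow_mul_negbinomial_sum
    by (assumption || apply cos_sq_add_sin_sq).
  f_equal; apply sum_eq; intros j _; now rewrite pow_mult.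
Qed.

Lemma sin_half_sq_pow_le u k :
  (sin (u / 2) ^ 2) ^ k <= Rabs u ^ (2 * k) / 2 ^ (2 * k).
Proof.
  assert (Hs : sin (u / 2) ^ 2 <= (Rabs u / 2) ^ 2).
  { rewrite <- pow2_abs; apply pow_incr; split; [apply Rabs_pos|].
    replace (Rabs u / 2) with (Rabs (u / 2))
      by (unfold Rdiv; rewrite Rabs_mult, Rabs_inv, (Rabs_right 2) by lra; reflexivity).
    apply Rabs_sin_le. }
  unfold Rdiv; rewrite <- pow_inv, <- Rpow_mult_distr, pow_mult.
  apply pow_incr; split; [apply pow2_ge_0 | exact Hs].
Qed.

Theorem mainTheorem3 (N l : nat) (hl : (0 < l)%nat) (hlN : (l < N)%nat) :
  forall xi : R,
    Rabs (pseudo_mask_II N l xi) >= 1 - C1_const N l * Rabs xi ^ (2 * l + 2).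
Proof.
  intros xi.
  set (S0 := sum_f_R0 (fun i => C (N + l) (l + 1 + i)) (N - 1)).
  assert (HS0 : 0 <= S0) by (apply cond_pos_sum; intros; apply C_ge0).
  assert (Htail : 1 - pseudo_mask_II N l xi <= (sin (xi / 2) ^ 2) ^ (l + 1) * S0).
  { rewrite pseudo_mask_II_binomial_head by lia.
    unfold S0; replace (N - 1)%nat with (N + l - S l)%nat by lia.
    apply one_sub_binomial_head_le;
      [lia | apply pow2_ge_0 | apply pow2_ge_0 | apply cos_sq_add_sin_sq]. }
  pose proof (sin_half_sq_pow_le xi (l + 1)) as Hsin.
  replace (2 * (l + 1))%nat with (2 * l + 2)%nat in Hsin by lia.
  assert (Hscale : C1_const N l * Rabs xi ^ (2 * l + 2)
                   = S0 * (Rabs xi ^ (2 * l + 2) / 2 ^ (2 * l + 2)))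
    by (unfold C1_const; fold S0; field; apply pow_nonzero; lra).
  apply Rle_ge; eapply Rle_trans; [|apply Rle_abs].
  rewrite Hscale.
  assert (S0 * (sin (xi / 2) ^ 2) ^ (l + 1)
          <= S0 * (Rabs xi ^ (2 * l + 2) / 2 ^ (2 * l + 2)))
    by (apply Rmult_le_compat_l; assumption).
  lra.
Qed.
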